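(* Let $N=[n]$ and let $v:2^N\to\mathbb{R}_+$ be any monotone valuation with $v(\emptyset)=0$. For any decision map $X'$ for $v$ and any $\epsilon>0$, there exists an $\epsilon$-Nash equilibrium $p$ of the pricing game defined by $v$ and $X'$ which is welfare maximizing, i.e., $v(X'(p))=\max_{S\subseteq N}v(S)$.
   Context: Pricing game: $N=[n]$ is a set of services, service $i$ controlled by seller $i$. A buyer has valuation $v:2^N\to\mathbb{R}_+$, monotone with $v(\emptyset)=0$. For $p\in\mathbb{R}^n_+$, $p(S)=\sum_{j\in S}p_j$ and $D(v;p)=\arg\max_{S\subseteq N}(v(S)-p(S))$. A decision map is $X':\mathbb{R}^n_+\to 2^N$ with $X'(p)\in D(v;p)$ for all $p$ (not necessarily maximal). Seller $i$'s utility is $u_i(p)=p_i\cdot\mathbf{1}\{i\in X'(p)\}$. An $\epsilon$-Nash equilibrium is a $p$ with $u_i(p)\ge u_i(p_i',p_{-i})-\epsilon$ for all $i$ and $p_i'\in\mathbb{R}_+$. The welfare at $p$ is $v(X'(p))$. *)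

From HB Require Import structures.
From mathcomp Require Import all_boot all_order all_algebra.
From mathcomp Require Import reals.
Set Implicit Arguments. Unset Strict Implicit. Unset Printing Implicit Defensive.
Import Order.TTheory GRing.Theory Num.Theory.
Local Open Scope ring_scope.

Section Pricing.
Variables (R : realType) (n : nat).

Definition price_sum (p : 'I_n -> R) (S : {set 'I_n}) : R := \sum_(j in S) p j.

Definition nonneg_price (p : 'I_n -> R) : Prop := forall i, 0 <= p i.

Definition valuation (v : {set 'I_n} -> R) : Prop :=
  [/\ v set0 = 0, (forall S : {set 'I_n}, 0 <= v S) & (forall S T : {set 'I_n}, S \subset T -> v S <= v T)].

Definition in_demand (v : {set 'I_n} -> R) (p : 'I_n -> R) (S : {set 'I_n}) : Prop :=
  forall T : {set 'I_n}, v T - price_sum p T <= v S - price_sum p S.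

Definition decision_map (v : {set 'I_n} -> R) (X : ('I_n -> R) -> {set 'I_n}) : Prop :=
  forall p, nonneg_price p -> in_demand v p (X p).

Definition utility (X : ('I_n -> R) -> {set 'I_n}) (p : 'I_n -> R) (i : 'I_n) : R :=
  p i * (if i \in X p then 1 else 0).

Definition deviate (p : 'I_n -> R) (i : 'I_n) (q : R) : 'I_n -> R :=
  fun j => if j == i then q else p j.

Definition eps_Nash (X : ('I_n -> R) -> {set 'I_n}) (eps : R) (p : 'I_n -> R) : Prop :=
  forall (i : 'I_n) (q : R), 0 <= q -> utility X (deviate p i q) i - eps <= utility X p i.

End Pricing.

From HB Require Import structures.
From mathcomp Require Import all_boot all_order all_algebra.
From mathcomp Require Import reals.
From mathcomp Require Import lra.

(* First find prices ph at which the grand bundle N is demanded and every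
   seller i is avoidable, i.e. some demanded bundle T omits i.  Starting from
   zero prices, raise each p_i in turn by the least slack
   (v N - ph N) - (v T - ph T) over bundles T omitting i: N stays demanded, T
   becomes demanded, and bundles already demanded stay demanded.
   Then lower every price by eps/(n+1), clipped at 0.  A seller with positive
   price becomes strictly necessary, so every demanded bundle contains it and
   the others are free: the buyer's choice is worth v N.  A seller i deviating
   to q is bought only if the new bundle beats the avoiding bundle T, which
   bounds q by p_i plus the total discount on N \ T, at most eps. *)

Set Implicit Arguments. Unset Strict Implicit. Unset Printing Implicit Defensive.
Import Order.TTheory GRing.Theory Num.Theory.
Local Open Scope ring_scope.

Section PriceSum.
Variables (R : realType) (n : nat).
Implicit Types (p : 'I_n -> R) (S T : {set 'I_n}) (i j : 'I_n).

Lemma price_sum_setC p T : price_sum p setT = price_sum p T + price_sum p (~: T).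
Proof. by rewrite /price_sum (big_setID T) setTI setTD. Qed.

Lemma price_sum_deviate p i q S :
  price_sum (deviate p i q) S = price_sum p S + (if i \in S then q - p i else 0).
Proof.
rewrite /price_sum; have [iS | iNS] := boolP (i \in S); last first.
  rewrite addr0; apply: eq_bigr => j jS; rewrite /deviate.
  by case: eqP => // ji; rewrite -ji jS in iNS.
rewrite !(bigD1 i iS) /= /deviate eqxx.
by rewrite (eq_bigr p) => [|j /andP [_ /negbTE ->] //]; lra.
Qed.

Lemma deviate_nonneg p i q : nonneg_price p -> 0 <= q -> nonneg_price (deviate p i q).
Proof. by move=> p_ge0 q_ge0 j; rewrite /deviate; case: (j == i). Qed.

Lemma ler_price_sum p p' S : (forall j, p j <= p' j) -> price_sum p S <= price_sum p' S.
Proof. by move=> le_pp'; apply: ler_sum => j _. Qed.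

Lemma ltr_price_sum p p' S j : (forall j, p j <= p' j) -> j \in S -> p j < p' j ->
  price_sum p S < price_sum p' S.
Proof.
move=> le_pp' jS lt_pp'; rewrite /price_sum !(bigD1 j jS) /=.
by apply: ltr_leD => //; apply: ler_sum => k _.
Qed.

End PriceSum.

Section Demand.
Variables (R : realType) (n : nat) (v : {set 'I_n} -> R).
Implicit Types (p : 'I_n -> R) (S T : {set 'I_n}) (i j : 'I_n).

Lemma in_demand_ge p S T : in_demand v p S ->
  v S - price_sum p S <= v T - price_sum p T -> in_demand v p T.
Proof. by move=> dS le_ST U; apply: le_trans le_ST. Qed.

Lemma in_demand_setTP p :
  in_demand v p setT <-> forall T, price_sum p (~: T) <= v setT - v T.
Proof.
split=> [dT T | le_T T]; have := price_sum_setC p T.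
  by have := dT T; lra.
by have := le_T T; lra.
Qed.

Lemma in_demand_setT_le p p' : (forall j, p' j <= p j) ->
  in_demand v p setT -> in_demand v p' setT.
Proof.
move=> le_p'p /in_demand_setTP dT; apply/in_demand_setTP => T.
exact: le_trans (ler_price_sum _ le_p'p) (dT T).
Qed.

Lemma mem_in_demand_lt p p' S j : (forall j, p' j <= p j) -> p' j < p j ->
  in_demand v p setT -> in_demand v p' S -> j \in S.
Proof.
move=> le_p'p lt_p'p /in_demand_setTP dT dS; apply/negPn/negP => jNS.
have := ltr_price_sum le_p'p (_ : j \in ~: S) lt_p'p; rewrite in_setC => /(_ jNS).
by have := dT S; have := dS setT; have := price_sum_setC p' S; lra.
Qed.

Lemma in_demand_free_complement p S : in_demand v p S ->
  (forall j, j \notin S -> p j = 0) -> v setT <= v S.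
Proof.
move=> dS free; have := dS setT; rewrite (price_sum_setC p S).
by rewrite [price_sum p (~: S)]big1 => [|j]; [lra | rewrite in_setC; apply: free].
Qed.

Definition avoidable p i := exists2 T : {set 'I_n}, i \notin T & in_demand v p T.

Lemma raise_price_avoidable p i : nonneg_price p -> in_demand v p setT ->
  exists p', [/\ nonneg_price p', in_demand v p' setT,
    (forall j, avoidable p j -> avoidable p' j) & avoidable p' i].
Proof.
move=> p_ge0 dT.
pose gap T := v setT - price_sum p setT - (v T - price_sum p T).
have iNset0 : i \notin set0 by rewrite in_set0.
have [T0 iNT0 minT0] := @arg_minP _ _ _ set0 (fun T => i \notin T) gap iNset0.
set m := gap T0 in minT0 *.
have m_ge0 : 0 <= m by have := dT T0; rewrite /m /gap; lra.
pose p' := deviate p i (p i + m).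
have surplusE T :
    v T - price_sum p' T = v T - price_sum p T - (if i \in T then m else 0).
  by rewrite price_sum_deviate; case: (i \in T); lra.
have dT' : in_demand v p' setT.
  move=> T; rewrite !surplusE in_setT; have [iT | iNT] := boolP (i \in T).
    by have := dT T; lra.
  by have := minT0 T iNT; rewrite /gap; lra.
exists p'; split => //.
- by apply: deviate_nonneg => //; apply: addr_ge0.
- move=> j [T jNT dT_]; exists T => //; apply: in_demand_ge dT' _.
  by rewrite !surplusE in_setT; have := dT_ setT; have := dT T; case: (i \in T); lra.
- exists T0 => //; apply: in_demand_ge dT' _.
  by rewrite !surplusE in_setT (negbTE iNT0) /m /gap; lra.
Qed.

Lemma exists_avoidable_prices : valuation v ->
  exists p, [/\ nonneg_price p, in_demand v p setT & forall i, avoidable p i].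
Proof.
case=> _ _ v_mono.
have avoid_seq (s : seq 'I_n) : exists p,
    [/\ nonneg_price p, in_demand v p setT & forall i, i \in s -> avoidable p i].
  elim: s => [|i s [p [p_ge0 dT avoid]]].
    exists (fun=> 0); split => // T.
    by rewrite /price_sum !big1 // !subr0; apply/v_mono/subsetT.
  have [p' [p'_ge0 dT' mono avoid_i]] := raise_price_avoidable i p_ge0 dT.
  exists p'; split => // j; rewrite inE => /orP [/eqP -> // | js].
  exact/mono/avoid.
have [p [p_ge0 dT avoid]] := avoid_seq (enum 'I_n).
by exists p; split => // i; apply: avoid; rewrite mem_enum.
Qed.

Lemma deviate_price_le p p' i q T D :
  in_demand v p setT -> in_demand v p T -> i \notin T -> in_demand v p' setT ->
  in_demand v (deviate p' i q) D -> i \in D ->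
  q <= p' i + (price_sum p (~: T) - price_sum p' (~: T)).
Proof.
move=> dT dT_ iNT dT' dD iD; have := dD T.
rewrite !price_sum_deviate iD (negbTE iNT) addr0.
have := dT' D; have := dT_ setT; have := dT T.
by have := price_sum_setC p T; have := price_sum_setC p' T; lra.
Qed.

Lemma bigmax_valuation : valuation v -> \big[Num.max/0]_(S : {set 'I_n}) v S = v setT.
Proof.
case=> _ v_ge0 v_mono; apply/eqP; rewrite eq_le (bigD1 setT) //= le_max lexx andbT.
rewrite ge_max lexx /=; elim/big_ind: _ => [||S _]; first exact: v_ge0.
  by move=> x y le_x le_y; rewrite ge_max le_x le_y.
exact/v_mono/subsetT.
Qed.

End Demand.

Section Discount.
Variables (R : realType) (n : nat) (p : 'I_n -> R) (d : R).
Hypotheses (p_ge0 : nonneg_price p) (d_gt0 : 0 < d).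

Definition discount : 'I_n -> R := fun j => Num.max 0 (p j - d).

Lemma discount_ge0 : nonneg_price discount.
Proof. by move=> j; rewrite le_max lexx. Qed.

Lemma discount_le j : discount j <= p j.
Proof. by rewrite /discount ge_max p_ge0 gerBl ltW. Qed.

Lemma discount_lt j : 0 < p j -> discount j < p j.
Proof. by move=> p_gt0; rewrite /discount gt_max p_gt0 gtrBl. Qed.

Lemma discount_eq0 j : p j <= 0 -> discount j = 0.
Proof.
by move=> p_le0; apply/eqP; rewrite eq_le discount_ge0 andbT (le_trans (discount_le j)).
Qed.

Lemma price_sum_discount S : price_sum p S - price_sum discount S <= d *+ n.
Proof.
have gap_le j : p j - discount j <= d.
  have : p j - d <= discount j by rewrite le_max lexx orbT.
  lra.
rewrite /price_sum -sumrB (le_trans (ler_sum _ (fun j _ => gap_le j))) //.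
rewrite sumr_const ler_wpMn2l ?ltW //.
by rewrite (leq_trans (max_card _)) // card_ord.
Qed.

End Discount.

Theorem mainTheorem4 (R : realType) (n : nat) (v : {set 'I_n} -> R)
    (X : ('I_n -> R) -> {set 'I_n}) (eps : R) :
  valuation v -> decision_map v X -> 0 < eps ->
  exists p : 'I_n -> R,
    [/\ nonneg_price p, eps_Nash X eps p &
        v (X p) = \big[Num.max/0]_(S : {set 'I_n}) v S].
Proof.
move=> v_val dX eps_gt0; have [_ _ v_mono] := v_val.
have [ph [ph_ge0 dT avoid]] := exists_avoidable_prices v_val.
set d := eps / n.+1%:R.
have d_gt0 : 0 < d by rewrite divr_gt0 ?ltr0n.
have nd_le : d *+ n <= eps.
  by rewrite -mulr_natr mulrAC ler_pdivrMr ?ltr0n // ler_wpM2l ?ltW // ltr_nat.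
set p := discount ph d; have p_ge0 : nonneg_price p := discount_ge0 ph d.
have le_p := discount_le ph_ge0 d_gt0.
have dTp : in_demand v p setT := in_demand_setT_le le_p dT.
have mem_X j : 0 < ph j -> j \in X p.
  by move=> ph_gt0; apply: mem_in_demand_lt le_p (discount_lt d_gt0 ph_gt0) dT (dX p p_ge0).
have free j : j \notin X p -> p j = 0.
  by move=> jN; apply: (discount_eq0 ph_ge0 d_gt0); rewrite leNgt; exact: contra (mem_X j) jN.
exists p; split => //.
- move=> i q q_ge0; have -> : utility X p i = p i.
    by rewrite /utility; case: (boolP (i \in X p)) => [_ | /free ->]; rewrite ?mulr1 ?mul0r.
  rewrite /utility; case: ifP => [iD | _]; last by have := p_ge0 i; rewrite mulr0; lra.
  have [T iNT dT_] := avoid i.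
  have := deviate_price_le dT dT_ iNT dTp (dX _ (deviate_nonneg i p_ge0 q_ge0)) iD.
  by have := price_sum_discount ph d_gt0 (~: T); rewrite -/p /deviate eqxx mulr1; lra.
- apply/eqP; rewrite bigmax_valuation // eq_le v_mono ?subsetT //=.
  exact: in_demand_free_complement (dX p p_ge0) free.
Qed.
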